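(* Let $(\mathcal{A},\succ,\prec)$ be a finite-dimensional antidendriform algebra with associated antiassociative algebra $(\mathcal{A},\ast)$. Then $(\mathcal{A}\ltimes_{R^*_\prec,L^*_\succ}\mathcal{A}^*,\omega)$, where $\mathcal{A}^*$ carries the zero product, is a double construction of symplectic antiassociative algebra. Conversely, let $(T(\mathcal{A})=\mathcal{A}\oplus\mathcal{A}^*,\ast,\omega)$ be a double construction of symplectic antiassociative algebra such that $\mathcal{A}^*$ is an ideal of $T(\mathcal{A})$. Then the product of $\mathcal{A}^*$ is zero, and $(T(\mathcal{A}),\omega)$ is isomorphic (as double constructions of symplectic antiassociative algebras) to $(\mathcal{A}\ltimes_{R^*_\prec,L^*_\succ}\mathcal{A}^*,\omega)$, where $(\succ,\prec)$ is the antidendriform structure on $\mathcal{A}$ obtained by restricting the one defined on $T(\mathcal{A})$ by $\omega(u\succ v,w)=\omega(v,w\ast u)$, $\omega(u\prec v,w)=\omega(u,v\ast w)$.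
   Context: An antiassociative algebra is a vector space with bilinear product satisfying $(x\ast y)\ast z=-x\ast(y\ast z)$. An antidendriform algebra is a vector space with bilinear products $\prec,\succ$ such that, with $x\ast y=x\prec y+x\succ y$: $(x\prec y)\prec z=-x\prec(y\ast z)$, $(x\succ y)\prec z=-x\succ(y\prec z)$, $x\succ(y\succ z)=-(x\ast y)\succ z$. $R^*_\prec,L^*_\succ:\mathcal{A}\to gl(\mathcal{A}^* )$ are given by $\langle R^*_\prec(x)a^*,y\rangle=\langle y\prec x,a^*\rangle$, $\langle L^*_\succ(x)a^*,y\rangle=\langle x\succ y,a^*\rangle$. $\mathcal{A}\ltimes_{R^*_\prec,L^*_\succ}\mathcal{A}^*$ is $\mathcal{A}\oplus\mathcal{A}^*$ with product $(x+a^* )\ast(y+b^* )=x\ast y+R^*_\prec(x)b^*+L^*_\succ(y)a^*$. A double construction of symplectic antiassociative algebra associated to antiassociative algebras $\mathcal{A}$ and $\mathcal{A}^*$ is an antiassociative product on $\mathcal{A}\oplus\mathcal{A}^*$ with $\mathcal{A},\mathcal{A}^*$ subalgebras and $\omega(x+a^*,y+b^* )=-\langle x,b^*\rangle+\langle a^*,y\rangle$ satisfying $\omega(u\ast v,w)+\omega(v\ast w,u)+\omega(w\ast u,v)=0$. Two such are isomorphic if there is an antiassociative algebra isomorphism $\varphi$ between them mapping $\mathcal{A}_1$ onto $\mathcal{A}_2$, $\mathcal{A}_1^*$ onto $\mathcal{A}_2^*$, with $\omega_1(u,v)=\omega_2(\varphi(u),\varphi(v))$. *)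

From HB Require Import structures.
From mathcomp Require Import all_boot all_order all_algebra.
Set Implicit Arguments. Unset Strict Implicit. Unset Printing Implicit Defensive.
Import GRing.Theory.
Local Open Scope ring_scope.

(* The n-dimensional space A is modelled as 'rV[K]_n; its dual Adual is also
   modelled as 'rV[K]_n, with the canonical pairing <x, a> = sum_i x_i a_i. *)

Section Defs.
Variables (K : fieldType) (n : nat).

Definition vec := 'rV[K]_n.
Definition dbl := (vec * vec)%type.

Definition pairing (x a : vec) : K := \sum_(i < n) x 0 i * a 0 i.

Definition inA (x : vec) : dbl := (x, 0).
Definition inAd (a : vec) : dbl := (0, a).

Definition dadd (u v : dbl) : dbl := (u.1 + v.1, u.2 + v.2).
Definition dscale (k : K) (u : dbl) : dbl := (k *: u.1, k *: u.2).
Definition dopp (u : dbl) : dbl := (- u.1, - u.2).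

Definition symp (u v : dbl) : K := - pairing u.1 v.2 + pairing v.1 u.2.

Definition bilinear_vec (p : vec -> vec -> vec) : Prop :=
  forall (k : K) (x y z : vec),
    p (k *: x + y) z = k *: p x z + p y z /\
    p z (k *: x + y) = k *: p z x + p z y.

Definition bilinear_dbl (p : dbl -> dbl -> dbl) : Prop :=
  forall (k : K) (u v w : dbl),
    p (dadd (dscale k u) v) w = dadd (dscale k (p u w)) (p v w) /\
    p w (dadd (dscale k u) v) = dadd (dscale k (p w u)) (p w v).

Definition antiassociative_dbl (p : dbl -> dbl -> dbl) : Prop :=
  forall u v w : dbl, p (p u v) w = dopp (p u (p v w)).

Definition antidendriform (prec succ : vec -> vec -> vec) : Prop :=
  bilinear_vec prec /\ bilinear_vec succ /\
  let ast := fun x y => prec x y + succ x y in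
  (forall x y z, prec (prec x y) z = - prec x (ast y z)) /\
  (forall x y z, prec (succ x y) z = - succ x (prec y z)) /\
  (forall x y z, succ x (succ y z) = - succ (ast x y) z).

Definition ev (i : 'I_n) : vec := delta_mx 0 i.

(* <R^dual_prec(x) a, y> = <y prec x, a> *)
Definition Rstar (prec : vec -> vec -> vec) (x a : vec) : vec :=
  \row_(i < n) pairing (prec (ev i) x) a.
(* <L^dual_succ(x) a, y> = <x succ y, a> *)
Definition Lstar (succ : vec -> vec -> vec) (x a : vec) : vec :=
  \row_(i < n) pairing (succ x (ev i)) a.

Definition sdprod (prec succ : vec -> vec -> vec) (u v : dbl) : dbl :=
  (prec u.1 v.1 + succ u.1 v.1, Rstar prec u.1 v.2 + Lstar succ v.1 u.2).

Definition double_construction (p : dbl -> dbl -> dbl) : Prop :=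
  [/\ bilinear_dbl p, antiassociative_dbl p,
      (forall x y : vec, (p (inA x) (inA y)).2 = 0),
      (forall a b : vec, (p (inAd a) (inAd b)).1 = 0) &
      (forall u v w : dbl,
         symp (p u v) w + symp (p v w) u + symp (p w u) v = 0)].

Definition dual_is_ideal (p : dbl -> dbl -> dbl) : Prop :=
  forall (u : dbl) (a : vec), (p u (inAd a)).1 = 0 /\ (p (inAd a) u).1 = 0.

Definition dc_isomorphism (p1 p2 : dbl -> dbl -> dbl) (phi : dbl -> dbl) : Prop :=
  [/\ ((forall k u v, phi (dadd (dscale k u) v) = dadd (dscale k (phi u)) (phi v))
       /\ bijective phi),
      (forall u v, phi (p1 u v) = p2 (phi u) (phi v)),
      ((forall x, exists y, phi (inA x) = inA y) /\ (forall y, exists x, phi (inA x) = inA y)),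
      ((forall a, exists b, phi (inAd a) = inAd b) /\ (forall b, exists a, phi (inAd a) = inAd b)) &
      (forall u v, symp u v = symp (phi u) (phi v))].

End Defs.

From HB Require Import structures.
From mathcomp Require Import all_boot all_order all_algebra.
From mathcomp Require Import ring.
Set Implicit Arguments. Unset Strict Implicit. Unset Printing Implicit Defensive.
Import GRing.Theory.
Local Open Scope ring_scope.

(* The whole argument rests on the nondegeneracy of the pairing <x, a> on
   A x A^*: vectors are determined by their pairings, and every linear form
   is represented by a vector.  Through it, R^*_prec and L^*_succ are the
   adjoints of right multiplication by prec and left multiplication by succ.

   1. For bilinear prec, succ, the semidirect product A |x A^* is bilinear
      and satisfies the cyclic omega-identity, and it is antiassociative
      if and only if (prec, succ) is antidendriform (pairing each component
      of the antiassociativity identity against A or A^* yields exactly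
      the three antidendriform axioms).
      The cyclic identity forces the product of A^* to vanish; defining
      prec, succ on A through omega, p coincides with the semidirect
      product of (prec, succ).  By 1, (prec, succ) is antidendriform, and
      the identity map is the required isomorphism. *)

Section Pairing.
Variables (K : fieldType) (n : nat).
Implicit Types (x y a b c : vec K n).

Lemma pairingDl x y a : pairing (x + y) a = pairing x a + pairing y a.
Proof. by rewrite /pairing -big_split; apply: eq_bigr => i _; rewrite mxE mulrDl. Qed.

Lemma pairingDr x a b : pairing x (a + b) = pairing x a + pairing x b.
Proof. by rewrite /pairing -big_split; apply: eq_bigr => i _; rewrite mxE mulrDr. Qed.

Lemma pairingZl k x a : pairing (k *: x) a = k * pairing x a.
Proof. by rewrite /pairing mulr_sumr; apply: eq_bigr => i _; rewrite mxE mulrA. Qed.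

Lemma pairingZr k x a : pairing x (k *: a) = k * pairing x a.
Proof. by rewrite /pairing mulr_sumr; apply: eq_bigr => i _; rewrite mxE mulrCA. Qed.

Lemma pairingNl x a : pairing (- x) a = - pairing x a.
Proof. by rewrite /pairing -sumrN; apply: eq_bigr => i _; rewrite mxE mulNr. Qed.

Lemma pairingNr x a : pairing x (- a) = - pairing x a.
Proof. by rewrite /pairing -sumrN; apply: eq_bigr => i _; rewrite mxE mulrN. Qed.

Lemma pairing0l a : pairing 0 a = 0.
Proof. by rewrite /pairing big1 // => i _; rewrite mxE mul0r. Qed.

Lemma pairing0r x : pairing x 0 = 0.
Proof. by rewrite /pairing big1 // => i _; rewrite mxE mulr0. Qed.

Lemma pairingC x a : pairing x a = pairing a x.
Proof. by apply: eq_bigr => i _; rewrite mulrC. Qed.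

Lemma pairing_ev x i : pairing x (ev K i) = x 0 i.
Proof.
rewrite /pairing (bigD1 i) //= big1 => [|j ji]; rewrite /ev mxE.
  by rewrite !eqxx mulr1 addr0.
by rewrite (negbTE ji) andbF mulr0.
Qed.

Lemma pairing_injl x y : (forall c, pairing x c = pairing y c) -> x = y.
Proof. by move=> eq_xy; apply/rowP => j; rewrite -!pairing_ev. Qed.

Lemma pairing_injr a b : (forall t, pairing t a = pairing t b) -> a = b.
Proof. by move=> eq_ab; apply: pairing_injl => c; rewrite pairingC eq_ab pairingC. Qed.

Lemma linear_form_repr (f : vec K n -> K) :
  (forall k a b, f (k *: a + b) = k * f a + f b) ->
  forall c, f c = pairing c (\row_i f (ev K i)).
Proof.
move=> f_lin.
have f0 : f 0 = 0.
  have := f_lin 1 0 0; rewrite scale1r addr0 mul1r => f00.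
  by apply: (@addrI _ (f 0)); rewrite addr0 -f00.
have fD a b : f (a + b) = f a + f b by rewrite -[a]scale1r f_lin mul1r scale1r.
have fZ k a : f (k *: a) = k * f a by rewrite -[k *: a]addr0 f_lin f0 addr0.
move=> c; rewrite {1}(row_sum_delta c) (big_morph f fD f0) /pairing.
by apply: eq_bigr => i _; rewrite fZ mxE.
Qed.

End Pairing.

Section Bilinear.
Variables (K : fieldType) (n : nat).
Variable pr : vec K n -> vec K n -> vec K n.
Hypothesis pr_bilin : bilinear_vec pr.
Implicit Types (x y z t a : vec K n).

Lemma bilin0l z : pr 0 z = 0.
Proof.
have := (pr_bilin 1 0 0 z).1; rewrite !scale1r addr0 => pr00.
by apply: (@addrI _ (pr 0 z)); rewrite addr0 -pr00.
Qed.

Lemma bilin0r z : pr z 0 = 0.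
Proof.
have := (pr_bilin 1 0 0 z).2; rewrite !scale1r addr0 => pr00.
by apply: (@addrI _ (pr z 0)); rewrite addr0 -pr00.
Qed.

Lemma bilinDl x y z : pr (x + y) z = pr x z + pr y z.
Proof. by have := (pr_bilin 1 x y z).1; rewrite !scale1r. Qed.

Lemma bilinDr x y z : pr z (x + y) = pr z x + pr z y.
Proof. by have := (pr_bilin 1 x y z).2; rewrite !scale1r. Qed.

Lemma bilinZl k x z : pr (k *: x) z = k *: pr x z.
Proof. by have := (pr_bilin k x 0 z).1; rewrite !addr0 bilin0l addr0. Qed.

Lemma bilinZr k x z : pr z (k *: x) = k *: pr z x.
Proof. by have := (pr_bilin k x 0 z).2; rewrite !addr0 bilin0r addr0. Qed.

Lemma pairing_Rstar t x a : pairing t (Rstar pr x a) = pairing (pr t x) a.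
Proof.
rewrite (linear_form_repr (f := fun t => pairing (pr t x) a)) // => k u v.
by rewrite bilinDl bilinZl pairingDl pairingZl.
Qed.

Lemma pairing_Lstar t x a : pairing t (Lstar pr x a) = pairing (pr x t) a.
Proof.
rewrite (linear_form_repr (f := fun t => pairing (pr x t) a)) // => k u v.
by rewrite bilinDr bilinZr pairingDl pairingZl.
Qed.

Lemma Rstar0l a : Rstar pr 0 a = 0.
Proof. by apply/rowP => i; rewrite !mxE bilin0r pairing0l. Qed.

Lemma Rstar0r x : Rstar pr x 0 = 0.
Proof. by apply/rowP => i; rewrite !mxE pairing0r. Qed.

Lemma Lstar0l a : Lstar pr 0 a = 0.
Proof. by apply/rowP => i; rewrite !mxE bilin0l pairing0l. Qed.

Lemma Lstar0r x : Lstar pr x 0 = 0.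
Proof. by apply/rowP => i; rewrite !mxE pairing0r. Qed.

End Bilinear.

Section SemidirectProduct.
Variables (K : fieldType) (n : nat).
Variables prec succ : vec K n -> vec K n -> vec K n.
Hypothesis prec_bilin : bilinear_vec prec.
Hypothesis succ_bilin : bilinear_vec succ.

Let pairingE :=
  (pairingDl, pairingDr, pairingZl, pairingZr, pairingNl, pairingNr,
   pairing_Rstar prec_bilin, pairing_Lstar succ_bilin).

Let zeroE :=
  (bilin0l prec_bilin, bilin0r prec_bilin, bilin0l succ_bilin, bilin0r succ_bilin,
   Rstar0l prec_bilin, Rstar0r, Lstar0l succ_bilin, Lstar0r, addr0, add0r).

Lemma sdprod_bilinear : bilinear_dbl (sdprod prec succ).
Proof.
move=> k u v w; split; rewrite /sdprod /dadd /dscale /=; congr pair.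
- by rewrite !(bilinDl prec_bilin, bilinZl prec_bilin, bilinDl succ_bilin,
                 bilinZl succ_bilin) scalerDr addrACA.
- apply: pairing_injr => t.
  by rewrite !pairingE !(bilinDr prec_bilin, bilinZr prec_bilin) !pairingE; ring.
- by rewrite !(bilinDr prec_bilin, bilinZr prec_bilin, bilinDr succ_bilin,
                 bilinZr succ_bilin) scalerDr addrACA.
- apply: pairing_injr => t.
  by rewrite !pairingE !(bilinDl succ_bilin, bilinZl succ_bilin) !pairingE; ring.
Qed.

Lemma sdprod_cyclic (u v w : dbl K n) :
  symp (sdprod prec succ u v) w + symp (sdprod prec succ v w) u
    + symp (sdprod prec succ w u) v = 0.
Proof. by rewrite /symp /sdprod /= !pairingE; ring. Qed.

(* Its A^*-component, on the triples (y, z, c),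
   (z, c, x), (c, x, y) with c in A^* and paired with x, y, z respectively,
   is the adjoint form of each axiom; conversely the axioms give the
   A^*-component by adjunction and the A-component by summing them. *)
Lemma sdprod_antiassociativeP :
  antiassociative_dbl (sdprod prec succ) <-> antidendriform prec succ.
Proof.
split=> [sd_anti | [_ [_ /= [ax1 [ax2 ax3]]]]].
  have sd_antiA u v w := congr1 snd (sd_anti u v w).
  do 2!split=> //=; split; [|split] => x y z; apply: pairing_injl => c.
  - have := sd_antiA (inA y) (inA z) (inAd c).
    rewrite /sdprod /dopp /= !zeroE.
    by move=> eq_yzc; rewrite pairingNl -!(pairing_Rstar prec_bilin) eq_yzc pairingNr opprK.
  - have := sd_antiA (inA z) (inAd c) (inA x).
    rewrite /sdprod /dopp /= !zeroE.
    by move=> eq_zcx; rewrite pairingNl -(pairing_Rstar prec_bilin) -!(pairing_Lstar succ_bilin)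
         -(pairing_Rstar prec_bilin) eq_zcx pairingNr.
  - have := sd_antiA (inAd c) (inA x) (inA y).
    rewrite /sdprod /dopp /= !zeroE.
    by move=> eq_cxy; rewrite pairingNl -!(pairing_Lstar succ_bilin) eq_cxy pairingNr.
have ax1' t x y : prec t (prec x y + succ x y) = - prec (prec t x) y.
  by rewrite ax1 opprK.
have ax3' x y z : succ (prec x y + succ x y) z = - succ x (succ y z).
  by rewrite ax3 opprK.
move=> u v w; rewrite /sdprod /dopp /=; congr pair.
  apply: pairing_injl => c.
  rewrite ax3' (bilinDl prec_bilin) ax1 ax2 (bilinDr succ_bilin).
  by rewrite !pairingE; ring.
apply: pairing_injr => t.
by rewrite !pairingE ax1' ax2 ax3 !pairingE; ring.
Qed.

Lemma antidendriform_double_construction :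
  antidendriform prec succ -> double_construction (sdprod prec succ).
Proof.
move=> /sdprod_antiassociativeP sd_anti; split=> //.
- exact: sdprod_bilinear.
- by move=> x y /=; rewrite Rstar0r Lstar0r addr0.
- by move=> a b /=; rewrite (bilin0l prec_bilin) (bilin0l succ_bilin) addr0.
- exact: sdprod_cyclic.
Qed.

End SemidirectProduct.

Section Splitting.
Variables (K : fieldType) (n : nat).
Implicit Types (x y a : vec K n).

Lemma dbl_decomp x a : (x, a) = dadd (inA x) (inAd a).
Proof. by rewrite /dadd /inA /inAd /= addr0 add0r. Qed.

Lemma inA_lin k x y : inA (k *: x + y) = dadd (dscale k (inA x)) (inA y).
Proof. by rewrite /inA /dadd /dscale /= scaler0 addr0. Qed.

Lemma inAd_lin k x y : inAd (k *: x + y) = dadd (dscale k (inAd x)) (inAd y).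
Proof. by rewrite /inAd /dadd /dscale /= scaler0 addr0. Qed.

End Splitting.

Section IdealDualDoubleConstruction.
Variables (K : fieldType) (n : nat).
Variable p : dbl K n -> dbl K n -> dbl K n.
Hypothesis p_dc : double_construction p.
Hypothesis dual_ideal : dual_is_ideal p.
Implicit Types (x y a b c : vec K n) (u v w : dbl K n).

Lemma p_bilinear : bilinear_dbl p. Proof. by case: p_dc. Qed.

Lemma p_cyclic u v w : symp (p u v) w + symp (p v w) u + symp (p w u) v = 0.
Proof. by case: p_dc. Qed.

Lemma A_subalgebra x y : (p (inA x) (inA y)).2 = 0.
Proof. by case: p_dc => _ _ ->. Qed.

Lemma pDl u v w : p (dadd u v) w = dadd (p u w) (p v w).
Proof. by have := (p_bilinear 1 u v w).1; rewrite /dscale !scale1r -!surjective_pairing. Qed.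

Lemma pDr u v w : p w (dadd u v) = dadd (p w u) (p w v).
Proof. by have := (p_bilinear 1 u v w).2; rewrite /dscale !scale1r -!surjective_pairing. Qed.

(* The product of A^* vanishes: its A^*-part is killed by the cyclic
   identity against A, since A^* is an ideal. *)
Lemma dual_product0 a b : p (inAd a) (inAd b) = (0, 0).
Proof.
rewrite [LHS]surjective_pairing; congr pair; first by case: p_dc => _ _ _ ->.
apply: pairing_injr => t; rewrite pairing0r.
have := p_cyclic (inAd a) (inAd b) (inA t); rewrite /symp.
rewrite (dual_ideal (inA t) a).1 (dual_ideal (inA t) b).2 /inA /inAd /=.
by rewrite !pairing0l !pairing0r !oppr0 !add0r !addr0.
Qed.

Definition ind_prec x y : vec K n :=
  \row_i pairing x (p (inA y) (inAd (ev K i))).2.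
Definition ind_succ x y : vec K n :=
  \row_i pairing y (p (inAd (ev K i)) (inA x)).2.

Lemma pairing_ind_prec x y c :
  pairing (ind_prec x y) c = pairing x (p (inA y) (inAd c)).2.
Proof.
rewrite pairingC (linear_form_repr (f := fun c => pairing x (p (inA y) (inAd c)).2)) //.
by move=> k a b; rewrite inAd_lin (p_bilinear k _ _ _).2 /= pairingDr pairingZr.
Qed.

Lemma pairing_ind_succ x y c :
  pairing (ind_succ x y) c = pairing y (p (inAd c) (inA x)).2.
Proof.
rewrite pairingC (linear_form_repr (f := fun c => pairing y (p (inAd c) (inA x)).2)) //.
by move=> k a b; rewrite inAd_lin (p_bilinear k _ _ _).1 /= pairingDr pairingZr.
Qed.

(* On A, p is the sum of the two induced products by the cyclic identity against A^*. *)
Lemma p_on_A x y : (p (inA x) (inA y)).1 = ind_prec x y + ind_succ x y.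
Proof.
apply: pairing_injl => c; rewrite pairingDl pairing_ind_prec pairing_ind_succ.
have := p_cyclic (inA x) (inA y) (inAd c); rewrite /symp.
rewrite /inA /inAd /= !pairing0l !pairing0r !oppr0 !addr0 => cyc.
by apply/eqP; rewrite -subr_eq0; apply/eqP; rewrite -oppr0 -cyc; ring.
Qed.

Lemma ind_prec_bilinear : bilinear_vec ind_prec.
Proof.
move=> k x y z; split; apply: pairing_injl => c.
  by rewrite pairingDl pairingZl !pairing_ind_prec pairingDl pairingZl.
rewrite pairingDl pairingZl !pairing_ind_prec inA_lin (p_bilinear _ _ _ _).1 /=.
by rewrite pairingDr pairingZr.
Qed.

Lemma ind_succ_bilinear : bilinear_vec ind_succ.
Proof.
move=> k x y z; split; apply: pairing_injl => c.
  rewrite pairingDl pairingZl !pairing_ind_succ inA_lin (p_bilinear _ _ _ _).2 /=.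
  by rewrite pairingDr pairingZr.
by rewrite pairingDl pairingZl !pairing_ind_succ pairingDl pairingZl.
Qed.

Lemma p_sdprodE u v : p u v = sdprod ind_prec ind_succ u v.
Proof.
case: u => x a; case: v => y b; rewrite !dbl_decomp pDl !pDr dual_product0.
rewrite /dadd /sdprod /= p_on_A A_subalgebra.
rewrite (dual_ideal (inA x) b).1 (dual_ideal (inA y) a).2 !addr0 !add0r.
congr (_, _ + _); apply: pairing_injr => t.
  by rewrite (pairing_Rstar ind_prec_bilinear) pairing_ind_prec.
by rewrite (pairing_Lstar ind_succ_bilinear) pairing_ind_succ.
Qed.

Lemma ind_products_symp x y w :
  symp (inA (ind_succ x y)) w = symp (inA y) (p w (inA x)) /\
  symp (inA (ind_prec x y)) w = symp (inA x) (p (inA y) w).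
Proof.
case: w => z c; rewrite dbl_decomp pDl pDr /symp /dadd /= !A_subalgebra add0r addr0.
by rewrite pairing_ind_prec pairing_ind_succ !pairing0r !add0r.
Qed.

Lemma ind_products_antidendriform : antidendriform ind_prec ind_succ.
Proof.
apply/(sdprod_antiassociativeP ind_prec_bilinear ind_succ_bilinear) => u v w.
by rewrite -!p_sdprodE //; case: p_dc.
Qed.

End IdealDualDoubleConstruction.

Lemma dc_isomorphism_id (K : fieldType) (n : nat) (p q : dbl K n -> dbl K n -> dbl K n) :
  (forall u v, p u v = q u v) -> dc_isomorphism p q id.
Proof.
move=> eq_pq; split=> //.
- by split=> //; exists id.
- by split=> x; exists x.
- by split=> x; exists x.
Qed.

Theorem mainTheorem15 (K : fieldType) (n : nat) :
  (forall prec succ : vec K n -> vec K n -> vec K n,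
     antidendriform prec succ -> double_construction (sdprod prec succ))
  /\
  (forall p : dbl K n -> dbl K n -> dbl K n,
     double_construction p -> dual_is_ideal p ->
     (forall a b : vec K n, p (inAd a) (inAd b) = (0, 0))
     /\
     exists prec succ : vec K n -> vec K n -> vec K n,
       (forall (x y : vec K n) (w : dbl K n),
          symp (inA (succ x y)) w = symp (inA y) (p w (inA x)) /\
          symp (inA (prec x y)) w = symp (inA x) (p (inA y) w))
       /\ antidendriform prec succ
       /\ exists phi : dbl K n -> dbl K n,
            dc_isomorphism p (sdprod prec succ) phi).
Proof.
split.
  move=> prec succ adf; have [prec_bilin [succ_bilin _]] := adf.
  exact: antidendriform_double_construction.
move=> p p_dc dual_ideal; split; first exact: dual_product0.
exists (ind_prec p), (ind_succ p); split; first exact: ind_products_symp.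
split; first exact: ind_products_antidendriform.
by exists id; apply: dc_isomorphism_id; apply: p_sdprodE.
Qed.
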